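(* If $R$ is a semiquasitriangular structure for a Hopf algebra $H$ (with bijective antipode), then so is $\tau(R^{-1})=R^{-(2)}\otimes R^{-(1)}$, where $\tau:H\otimes H\to H\otimes H$ is the flip $\tau(h\otimes l)=l\otimes h$.
   Context: All vector spaces are over a field $k$, $\otimes=\otimes_k$. For a Hopf algebra $H$ with comultiplication $\Delta$, counit $\epsilon$, antipode $S$, we use Sweedler notation $\Delta(h)=h_1\otimes h_2$, etc. $\operatorname{Z}(H)$ is the centre of $H$. For $R\in H\otimes H$ we write $R=R^{(1)}\otimes R^{(2)}$ (summation understood); $R'^{(1)}\otimes R'^{(2)}$ denotes another copy of $R$; $R^{-1}=R^{-(1)}\otimes R^{-(2)}$. Definition (semiquasitriangular Hopf algebra): a pair $(H,R)$ with $H$ a Hopf algebra with bijective antipode and $R\in H\otimes H$ invertible such that (1) $R^{(1)}_1\otimes R^{(1)}_2\otimes R^{(2)} = R^{(1)}\otimes R'^{(1)}\otimes R^{(2)}R'^{(2)}$; (2) $R^{(1)}\otimes R^{(2)}_1\otimes R^{(2)}_2 = R^{(1)}R'^{(1)}\otimes R'^{(2)}\otimes R^{(2)}$; (3) $R^{(1)}\otimes R^{(2)}_2R'^{(1)}\otimes R^{(2)}_1R'^{(2)} = R^{(1)}\otimes R'^{(1)}R^{(2)}_1\otimes R'^{(2)}R^{(2)}_2$; (4) $R^{(1)}_2R'^{(1)}\otimes R^{(1)}_1R'^{(2)}\otimes R^{(2)} = R'^{(1)}R^{(1)}_1\otimes R'^{(2)}R^{(1)}_2\otimes R^{(2)}$;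 (5) $\nu(h):=R^{(2)}h_2R'^{(2)}\otimes S(h_1)S(R^{(1)})h_3R'^{(1)}\in H\otimes\operatorname{Z}(H)$ for all $h\in H$; (6) $\nu(h)=R^{(1)}h_2R'^{(1)}\otimes S(R'^{(2)})S(h_1)R^{(2)}h_3$ for all $h\in H$. Then $R$ is called a semiquasitriangular structure on $H$. *)

(* Hopf algebras over a field k, with tensors H⊗H and
   H⊗H⊗H represented by formal finite sums (lists of pairs / triples),
   equality in the tensor product being defined through the universal
   property: two formal sums are equal in H⊗H iff every bilinear map into
   every k-vector space W takes the same value on them. *)
From HB Require Import structures.
From mathcomp Require Import all_boot all_order all_algebra.
Set Implicit Arguments. Unset Strict Implicit. Unset Printing Implicit Defensive.
Import GRing.Theory.
Local Open Scope ring_scope.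

Section Tensors.
Variables (k : fieldType) (H : algType k).

Definition tens2 := seq (H * H).
Definition tens3 := seq (H * H * H).

Definition bilinear_map (W : lmodType k) (phi : H -> H -> W) : Prop :=
  forall (a : k) (x y z : H),
    phi (a *: x + y) z = a *: phi x z + phi y z /\
    phi z (a *: x + y) = a *: phi z x + phi z y.

Definition trilinear_map (W : lmodType k) (phi : H -> H -> H -> W) : Prop :=
  forall (a : k) (x y z w : H),
    [/\ phi (a *: x + y) z w = a *: phi x z w + phi y z w,
        phi z (a *: x + y) w = a *: phi z x w + phi z y w &
        phi z w (a *: x + y) = a *: phi z w x + phi z w y].

Definition teq2 (s t : tens2) : Prop :=
  forall (W : lmodType k) (phi : H -> H -> W), bilinear_map phi ->
    \sum_(p <- s) phi p.1 p.2 = \sum_(p <- t) phi p.1 p.2.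

Definition teq3 (s t : tens3) : Prop :=
  forall (W : lmodType k) (phi : H -> H -> H -> W), trilinear_map phi ->
    \sum_(p <- s) phi p.1.1 p.1.2 p.2 = \sum_(p <- t) phi p.1.1 p.1.2 p.2.

Definition tmul (s t : tens2) : tens2 :=
  [seq (p.1 * q.1, p.2 * q.2) | p <- s, q <- t].

Definition tone : tens2 := [:: (1, 1)].

Definition tflip (s : tens2) : tens2 := [seq (p.2, p.1) | p <- s].

Definition central (x : H) : Prop := forall y : H, y * x = x * y.

Definition in_H_tensor_Z (t : tens2) : Prop :=
  exists s : tens2, (forall p, p \in s -> central p.2) /\ teq2 t s.

(* Hopf algebra structure (Delta, epsilon, S) on the k-algebra H;
   Delta h is a chosen formal sum  h_1 ⊗ h_2. *)
Definition is_hopf (D : H -> tens2) (eps : H -> k) (S : H -> H) : Prop :=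
      (forall (a : k) (x y : H),
        teq2 (D (a *: x + y)) ([seq (a *: p.1, p.2) | p <- D x] ++ D y)) /\
      (forall h : H,
        teq3 [seq (q.1, q.2, p.2) | p <- D h, q <- D p.1]
             [seq (p.1, q.1, q.2) | p <- D h, q <- D p.2]) /\
      (forall h : H, \sum_(p <- D h) eps p.1 *: p.2 = h /\
                    \sum_(p <- D h) eps p.2 *: p.1 = h) /\
      (forall x y : H, teq2 (D (x * y)) (tmul (D x) (D y))) /\ teq2 (D 1) tone /\
      [/\ forall (a : k) (x y : H), eps (a *: x + y) = a * eps x + eps y,
          forall x y : H, eps (x * y) = eps x * eps y & eps 1 = 1] /\
      (forall (a : k) (x y : H), S (a *: x + y) = a *: S x + S y) /\
      (forall h : H, \sum_(p <- D h) S p.1 * p.2 = eps h *: 1 /\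
                    \sum_(p <- D h) p.1 * S p.2 = eps h *: 1).

Definition D2 (D : H -> tens2) (h : H) : tens3 :=
  [seq (q.1, q.2, p.2) | p <- D h, q <- D p.1].

(* nu(h) = R^(2) h_2 R'^(2) ⊗ S(h_1) S(R^(1)) h_3 R'^(1) *)
Definition nu (D : H -> tens2) (S : H -> H) (R : tens2) (h : H) : tens2 :=
  [seq (p.2 * xr.1.1.2 * xr.2.2, S xr.1.1.1 * S p.1 * xr.1.2 * xr.2.1)
     | p <- R, xr <- [seq (x, r) | x <- D2 D h, r <- R]].

(* R^(1) h_2 R'^(1) ⊗ S(R'^(2)) S(h_1) R^(2) h_3 *)
Definition nu' (D : H -> tens2) (S : H -> H) (R : tens2) (h : H) : tens2 :=
  [seq (p.1 * xr.1.1.2 * xr.2.1, S xr.2.2 * S xr.1.1.1 * p.2 * xr.1.2)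
     | p <- R, xr <- [seq (x, r) | x <- D2 D h, r <- R]].

Definition semiquasitriangular (D : H -> tens2) (S : H -> H) (R : tens2) : Prop :=
  (exists Ri : tens2, teq2 (tmul R Ri) tone /\ teq2 (tmul Ri R) tone) /\
  (* (1) *)
  teq3 [seq (q.1, q.2, p.2) | p <- R, q <- D p.1]
       [seq (p.1, q.1, p.2 * q.2) | p <- R, q <- R] /\
  (* (2) *)
  teq3 [seq (p.1, q.1, q.2) | p <- R, q <- D p.2]
       [seq (p.1 * q.1, q.2, p.2) | p <- R, q <- R] /\
  (* (3) *)
  teq3 [seq (p.1, qr.1.2 * qr.2.1, qr.1.1 * qr.2.2)
          | p <- R, qr <- [seq (q, r) | q <- D p.2, r <- R]]
       [seq (p.1, qr.2.1 * qr.1.1, qr.2.2 * qr.1.2)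
          | p <- R, qr <- [seq (q, r) | q <- D p.2, r <- R]] /\
  (* (4) *)
  teq3 [seq (qr.1.2 * qr.2.1, qr.1.1 * qr.2.2, p.2)
          | p <- R, qr <- [seq (q, r) | q <- D p.1, r <- R]]
       [seq (qr.2.1 * qr.1.1, qr.2.2 * qr.1.2, p.2)
          | p <- R, qr <- [seq (q, r) | q <- D p.1, r <- R]] /\
  (* (5) *)
  (forall h : H, in_H_tensor_Z (nu D S R h)) /\
  (* (6) *)
  (forall h : H, teq2 (nu D S R h) (nu' D S R h)).

End Tensors.

From Stdlib Require Import Setoid Morphisms.
From HB Require Import structures.
From mathcomp Require Import all_boot all_order all_algebra.
Set Implicit Arguments. Unset Strict Implicit. Unset Printing Implicit Defensive.
Import GRing.Theory.
Local Open Scope ring_scope.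

(* Write [R~ = tau(R^-1)].  Axioms (1) and (2) factor [(Delta ⊗ id) R] and [(id ⊗ Delta) R] as
   products of copies of [R] sitting in two of the three tensor legs; as [Delta ⊗ id] and
   [id ⊗ Delta] are algebra maps, they send [R^-1] to the inverses of these products, i.e. to the
   reversed products of copies of [R^-1], which after permuting the legs are (2) and (1) for [R~].
   Axioms (3) and (4) are conjugation identities [A B = B C] in [H ⊗ H ⊗ H] between invertible
   tensors; inverting gives [C^-1 B^-1 = B^-1 A^-1], which after reversing the legs are (4) and
   (3) for [R~].  Finally (1), (2) and the counit give [(S ⊗ id) R = R^-1 = (id ⊗ S^-1) R]; with
   these, the centrality of the second leg of [nu] shows [nu_R~ = nu'_R] and [nu'_R~ = nu_R], so
   (5) and (6) pass from [R] to [R~]. *)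

Lemma big_allpairs_nested (V : nmodType) I J K (s : seq I) (g : I -> seq J) (t : seq K)
    T (f : I -> J * K -> T) (F : T -> V) :
  \sum_(w <- [seq f p qr | p <- s, qr <- [seq (q, r) | q <- g p, r <- t]]) F w =
  \sum_(p <- s) \sum_(q <- g p) \sum_(r <- t) F (f p (q, r)).
Proof. by rewrite big_allpairs_dep; apply: eq_bigr => p _; rewrite big_allpairs_dep. Qed.

Section Multilinear.
Variables (k : fieldType) (H : algType k).
Implicit Types (W : lmodType k).

Lemma linear_fun0 W (f : H -> W) : linear f -> f 0 = 0.
Proof. by move=> lf; rewrite -[X in f X](subrr 0) (zmod_morphism_linear lf) subrr. Qed.

Lemma linear_funD W (f : H -> W) : linear f -> forall x y, f (x + y) = f x + f y.
Proof. by move=> lf x y; have := lf 1 x y; rewrite !scale1r. Qed.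

Lemma linear_funZ W (f : H -> W) : linear f -> forall a x, f (a *: x) = a *: f x.
Proof. by move=> lf a x; rewrite -[a *: x]addr0 lf (linear_fun0 lf) addr0. Qed.

Lemma linear_fun_sum W (f : H -> W) : linear f -> forall I (r : seq I) (F : I -> H),
  f (\sum_(i <- r) F i) = \sum_(i <- r) f (F i).
Proof.
move=> lf I r F; elim: r => [|x r IHr]; first by rewrite !big_nil (linear_fun0 lf).
by rewrite !big_cons (linear_funD lf) IHr.
Qed.

Lemma linear_fun_scale_sum W (f : H -> W) : linear f -> forall I (r : seq I) c x,
  f (\sum_(i <- r) c i *: x i) = \sum_(i <- r) c i *: f (x i).
Proof.
by move=> lf I r c x; rewrite (linear_fun_sum lf); under eq_bigr do rewrite (linear_funZ lf).
Qed.

Lemma linear_id_fun : linear (fun x : H => x).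
Proof. by []. Qed.

Lemma linear_mull_fun (u : H) (g : H -> H) : linear g -> linear (fun x => u * g x).
Proof. by move=> lg a x y; rewrite lg mulrDr scalerAr. Qed.

Lemma linear_mulr_fun (u : H) (g : H -> H) : linear g -> linear (fun x => g x * u).
Proof. by move=> lg a x y; rewrite lg mulrDl scalerAl. Qed.

Lemma linear_comp_fun W (f : H -> W) (g : H -> H) :
  linear f -> linear g -> linear (fun x => f (g x)).
Proof. by move=> lf lg a x y; rewrite lg lf. Qed.

Lemma linear_sum_fun W I (r : seq I) (F : I -> H -> W) :
  (forall i, linear (F i)) -> linear (fun x => \sum_(i <- r) F i x).
Proof.
move=> lF a x y; rewrite scaler_sumr -big_split /=.
by apply: eq_bigr => i _; rewrite lF.
Qed.

Lemma linear_scale_fun W (c : k) (f : H -> W) : linear f -> linear (fun x => c *: f x).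
Proof. by move=> lf a x y; rewrite lf scalerDr !scalerA mulrC. Qed.

Lemma bilinear_linl W (phi : H -> H -> W) z : bilinear_map phi -> linear (phi^~ z).
Proof. by move=> bphi a x y; case: (bphi a x y z). Qed.

Lemma bilinear_linr W (phi : H -> H -> W) z : bilinear_map phi -> linear (phi z).
Proof. by move=> bphi a x y; case: (bphi a x y z). Qed.

Lemma bilinearZl W (phi : H -> H -> W) a x y : bilinear_map phi -> phi (a *: x) y = a *: phi x y.
Proof. by move=> bphi; apply: (linear_funZ (bilinear_linl y bphi)). Qed.

Lemma bilinearZr W (phi : H -> H -> W) a x y : bilinear_map phi -> phi x (a *: y) = a *: phi x y.
Proof. by move=> bphi; apply: (linear_funZ (bilinear_linr x bphi)). Qed.

Lemma trilinear_lin1 W (F : H -> H -> H -> W) y z :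
  trilinear_map F -> linear (fun x => F x y z).
Proof. by move=> tF a x x'; case: (tF a x x' y z). Qed.

Lemma trilinear_lin2 W (F : H -> H -> H -> W) x z :
  trilinear_map F -> linear (fun y => F x y z).
Proof. by move=> tF a y y'; case: (tF a y y' x z). Qed.

Lemma trilinear_lin3 W (F : H -> H -> H -> W) x y :
  trilinear_map F -> linear (F x y).
Proof. by move=> tF a z z'; case: (tF a z z' x y). Qed.

Lemma bilinear_of_linear W (phi : H -> H -> W) :
  (forall z, linear (phi^~ z)) -> (forall z, linear (phi z)) -> bilinear_map phi.
Proof. by move=> l1 l2 a x y z; split; [apply: l1 | apply: l2]. Qed.

Lemma trilinear_of_linear W (F : H -> H -> H -> W) :
  (forall y z, linear (fun x => F x y z)) -> (forall x z, linear (fun y => F x y z)) ->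
  (forall x y, linear (F x y)) -> trilinear_map F.
Proof. by move=> l1 l2 l3 a x y z w; split; [apply: l1 | apply: l2 | apply: l3]. Qed.

End Multilinear.

Ltac multilinear_with extra := repeat first
  [ exact: linear_id_fun
  | extra
  | apply: linear_sum_fun => ?
  | apply: linear_scale_fun
  | apply: linear_mull_fun
  | apply: linear_mulr_fun
  | match goal with bphi : bilinear_map ?phi |- _ =>
      first [ apply: (linear_comp_fun (bilinear_linl _ bphi))
            | apply: (linear_comp_fun (bilinear_linr _ bphi)) ] end
  | match goal with tF : trilinear_map ?F |- _ =>
      first [ apply: (linear_comp_fun (trilinear_lin1 _ _ tF))
            | apply: (linear_comp_fun (trilinear_lin2 _ _ tF))
            | apply: (linear_comp_fun (trilinear_lin3 _ _ tF)) ] end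
  | apply: bilinear_of_linear => ? /=
  | apply: trilinear_of_linear => ? ? /= ].

Ltac multilinear := multilinear_with fail.

Section MonoidUpToEquivalence.
Variables (T : Type) (eqv : T -> T -> Prop) (mul : T -> T -> T) (one : T).
Local Infix "≡" := eqv (at level 70).
Local Infix "⋅" := mul (at level 40, left associativity).
Hypothesis eqv_equiv : Equivalence eqv.
Hypothesis mul_eqv : Proper (eqv ==> eqv ==> eqv) mul.
Hypothesis mulA : forall x y z, x ⋅ y ⋅ z ≡ x ⋅ (y ⋅ z).
Hypothesis mul1x : forall x, one ⋅ x ≡ x.
Hypothesis mulx1 : forall x, x ⋅ one ≡ x.
#[local] Existing Instances eqv_equiv mul_eqv.
#[local] Set Default Proof Using "All".

Lemma eqv_inverse_unique x z z' y : x ⋅ z ≡ one -> z ≡ z' -> z' ⋅ y ≡ one -> x ≡ y.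
Proof. move=> xz zz' z'y; rewrite -[x]mulx1 -z'y -mulA -zz' xz mul1x; reflexivity. Qed.

Lemma eqv_mul_inverse a b a' b' :
  a ⋅ a' ≡ one -> b ⋅ b' ≡ one -> a ⋅ b ⋅ (b' ⋅ a') ≡ one.
Proof. move=> aa' bb'; rewrite mulA -(mulA b) bb' mul1x aa'; reflexivity. Qed.

Lemma eqv_left_cancel u r r' : u ⋅ r ≡ r -> r ⋅ r' ≡ one -> u ≡ one.
Proof. move=> ur rr'; rewrite -[u]mulx1 -{1}rr' -mulA ur rr'; reflexivity. Qed.

Lemma eqv_right_cancel u r r' : r ⋅ u ≡ r -> r' ⋅ r ≡ one -> u ≡ one.
Proof. move=> ru r'r; rewrite -[u]mul1x -{1}r'r mulA ru r'r; reflexivity. Qed.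

Lemma eqv_conj_inverse a b c a' b' c' :
  a ⋅ b ≡ b ⋅ c -> a ⋅ a' ≡ one -> b ⋅ b' ≡ one -> b' ⋅ b ≡ one -> c' ⋅ c ≡ one ->
  c' ⋅ b' ≡ b' ⋅ a'.
Proof.
move=> abc aa' bb' b'b c'c.
have b'a : b' ⋅ a ≡ c ⋅ b'.
  rewrite -[b' ⋅ a]mulx1 -bb' -mulA (mulA b') abc -!mulA b'b mul1x; reflexivity.
rewrite -[c' ⋅ b']mulx1 -aa' -mulA (mulA c') b'a -mulA c'c mul1x; reflexivity.
Qed.

End MonoidUpToEquivalence.

Section TensorMonoids.
Variables (k : fieldType) (H : algType k).
Implicit Types (s t : tens2 H) (X Y : tens3 H) (W : lmodType k).

Lemma teq2_refl s : teq2 s s. Proof. by []. Qed.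

Lemma teq2_sym s t : teq2 s t -> teq2 t s.
Proof. by move=> st W phi bphi; rewrite (st _ _ bphi). Qed.

Lemma teq2_trans s t u : teq2 s t -> teq2 t u -> teq2 s u.
Proof. by move=> st tu W phi bphi; rewrite (st _ _ bphi) (tu _ _ bphi). Qed.

Lemma teq2_equiv : Equivalence (@teq2 k H).
Proof. by split; [exact: teq2_refl | exact: teq2_sym | exact: teq2_trans]. Qed.

Lemma sum_tmul W (phi : H -> H -> W) s t :
  \sum_(p <- tmul s t) phi p.1 p.2 = \sum_(p <- s) \sum_(q <- t) phi (p.1 * q.1) (p.2 * q.2).
Proof. exact: big_allpairs_dep. Qed.

Lemma sum_tmul_one s t : teq2 (tmul s t) (tone H) ->
  forall W (phi : H -> H -> W), bilinear_map phi ->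
  \sum_(p <- s) \sum_(q <- t) phi (p.1 * q.1) (p.2 * q.2) = phi 1 1.
Proof. by move=> st W phi bphi; rewrite -sum_tmul (st _ _ bphi) big_seq1. Qed.

Lemma tmul_teq2 : Proper (@teq2 _ H ==> @teq2 _ H ==> @teq2 _ H) (@tmul _ H).
Proof.
move=> s s' ss' t t' tt' W phi bphi; rewrite !sum_tmul.
rewrite (ss' _ (fun x y => \sum_(q <- t) phi (x * q.1) (y * q.2))) /=; last by multilinear.
by apply: eq_bigr => p _; apply: (tt' _ (fun x y => phi (p.1 * x) (p.2 * y))); multilinear.
Qed.

Lemma tmulA s t u : teq2 (tmul (tmul s t) u) (tmul s (tmul t u)).
Proof.
move=> W phi _; rewrite !sum_tmul big_allpairs_dep; apply: eq_bigr => p _.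
by rewrite big_allpairs_dep; do 2![apply: eq_bigr => ? _]; rewrite !mulrA.
Qed.

Lemma tmul_1l s : teq2 (tmul (tone H) s) s.
Proof. by move=> W phi _; rewrite sum_tmul big_seq1; under eq_bigr do rewrite !mul1r. Qed.

Lemma tmul_1r s : teq2 (tmul s (tone H)) s.
Proof. by move=> W phi _; rewrite sum_tmul; under eq_bigr do rewrite big_seq1 !mulr1. Qed.

Lemma teq2_inverse_unique s t t' u :
  teq2 (tmul s t) (tone H) -> teq2 t t' -> teq2 (tmul t' u) (tone H) -> teq2 s u.
Proof.
exact: (eqv_inverse_unique teq2_equiv tmul_teq2 tmulA tmul_1l tmul_1r).
Qed.

Lemma teq2_left_cancel u r r' :
  teq2 (tmul u r) r -> teq2 (tmul r r') (tone H) -> teq2 u (tone H).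
Proof. exact: (eqv_left_cancel teq2_equiv tmul_teq2 tmulA tmul_1l tmul_1r). Qed.

Lemma teq2_right_cancel u r r' :
  teq2 (tmul r u) r -> teq2 (tmul r' r) (tone H) -> teq2 u (tone H).
Proof. exact: (eqv_right_cancel teq2_equiv tmul_teq2 tmulA tmul_1l tmul_1r). Qed.

Lemma tflip_inverse s t : teq2 (tmul s t) (tone H) -> teq2 (tmul (tflip s) (tflip t)) (tone H).
Proof.
move=> st W phi bphi; rewrite sum_tmul big_map big_seq1.
under eq_bigr do rewrite big_map.
by apply: (sum_tmul_one st (phi := fun x y => phi y x)); multilinear.
Qed.

Definition tmul3 X Y : tens3 H :=
  [seq (p.1.1 * q.1.1, p.1.2 * q.1.2, p.2 * q.2) | p <- X, q <- Y].

Definition tone3 : tens3 H := [:: (1, 1, 1)].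

Lemma teq3_sym X Y : teq3 X Y -> teq3 Y X.
Proof. by move=> XY W F tF; rewrite (XY _ _ tF). Qed.

Lemma teq3_trans X Y Z : teq3 X Y -> teq3 Y Z -> teq3 X Z.
Proof. by move=> XY YZ W F tF; rewrite (XY _ _ tF) (YZ _ _ tF). Qed.

Lemma teq3_equiv : Equivalence (@teq3 k H).
Proof. by split; [move=> ? | exact: teq3_sym | exact: teq3_trans]. Qed.

Lemma sum_tmul3 W (F : H -> H -> H -> W) X Y :
  \sum_(w <- tmul3 X Y) F w.1.1 w.1.2 w.2 =
  \sum_(p <- X) \sum_(q <- Y) F (p.1.1 * q.1.1) (p.1.2 * q.1.2) (p.2 * q.2).
Proof. exact: big_allpairs_dep. Qed.

Lemma tmul3_teq3 : Proper (@teq3 _ H ==> @teq3 _ H ==> @teq3 _ H) tmul3.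
Proof.
move=> X X' XX' Y Y' YY' W F tF; rewrite !sum_tmul3.
rewrite (XX' _ (fun x y z => \sum_(q <- Y) F (x * q.1.1) (y * q.1.2) (z * q.2))) /=;
  last by multilinear.
apply: eq_bigr => p _.
by apply: (YY' _ (fun x y z => F (p.1.1 * x) (p.1.2 * y) (p.2 * z))); multilinear.
Qed.

Lemma tmul3A X Y Z : teq3 (tmul3 (tmul3 X Y) Z) (tmul3 X (tmul3 Y Z)).
Proof.
move=> W F _; rewrite !sum_tmul3 big_allpairs_dep; apply: eq_bigr => p _.
by rewrite big_allpairs_dep; do 2![apply: eq_bigr => ? _]; rewrite !mulrA.
Qed.

Lemma tmul3_1l X : teq3 (tmul3 tone3 X) X.
Proof. by move=> W F _; rewrite sum_tmul3 big_seq1; under eq_bigr do rewrite !mul1r. Qed.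

Lemma tmul3_1r X : teq3 (tmul3 X tone3) X.
Proof. by move=> W F _; rewrite sum_tmul3; under eq_bigr do rewrite big_seq1 !mulr1. Qed.

Lemma teq3_inverse_unique X Z Z' Y :
  teq3 (tmul3 X Z) tone3 -> teq3 Z Z' -> teq3 (tmul3 Z' Y) tone3 -> teq3 X Y.
Proof.
exact: (eqv_inverse_unique teq3_equiv tmul3_teq3 tmul3A tmul3_1l tmul3_1r).
Qed.

Lemma teq3_mul_inverse X Y X' Y' :
  teq3 (tmul3 X X') tone3 -> teq3 (tmul3 Y Y') tone3 ->
  teq3 (tmul3 (tmul3 X Y) (tmul3 Y' X')) tone3.
Proof. exact: (eqv_mul_inverse teq3_equiv tmul3_teq3 tmul3A tmul3_1l tmul3_1r). Qed.

Lemma teq3_conj_inverse A B C A' B' C' :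
  teq3 (tmul3 A B) (tmul3 B C) -> teq3 (tmul3 A A') tone3 -> teq3 (tmul3 B B') tone3 ->
  teq3 (tmul3 B' B) tone3 -> teq3 (tmul3 C' C) tone3 -> teq3 (tmul3 C' B') (tmul3 B' A').
Proof.
exact: (eqv_conj_inverse teq3_equiv tmul3_teq3 tmul3A tmul3_1l tmul3_1r).
Qed.

Definition leg12 s : tens3 H := [seq (p.1, p.2, 1) | p <- s].
Definition leg13 s : tens3 H := [seq (p.1, 1, p.2) | p <- s].
Definition leg23 s : tens3 H := [seq (1, p.1, p.2) | p <- s].

Lemma leg12_inverse s t : teq2 (tmul s t) (tone H) -> teq3 (tmul3 (leg12 s) (leg12 t)) tone3.
Proof.
move=> st W F tF; rewrite sum_tmul3 big_map big_seq1 /=.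
under eq_bigr do rewrite big_map /= mulr1.
by apply: (sum_tmul_one st (phi := fun x y => F x y 1)); multilinear.
Qed.

Lemma leg13_inverse s t : teq2 (tmul s t) (tone H) -> teq3 (tmul3 (leg13 s) (leg13 t)) tone3.
Proof.
move=> st W F tF; rewrite sum_tmul3 big_map big_seq1 /=.
under eq_bigr do rewrite big_map /= mulr1.
by apply: (sum_tmul_one st (phi := fun x z => F x 1 z)); multilinear.
Qed.

Lemma leg23_inverse s t : teq2 (tmul s t) (tone H) -> teq3 (tmul3 (leg23 s) (leg23 t)) tone3.
Proof.
move=> st W F tF; rewrite sum_tmul3 big_map big_seq1 /=.
under eq_bigr do rewrite big_map /= mulr1.
by apply: (sum_tmul_one st (phi := fun y z => F 1 y z)); multilinear.
Qed.

Lemma teq3_permute (g : H -> H -> H -> H * H * H) X Y :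
  (forall W (F : H -> H -> H -> W), trilinear_map F ->
     trilinear_map (fun x y z => F (g x y z).1.1 (g x y z).1.2 (g x y z).2)) ->
  teq3 X Y -> teq3 [seq g x.1.1 x.1.2 x.2 | x <- X] [seq g x.1.1 x.1.2 x.2 | x <- Y].
Proof. by move=> gF XY W F tF; rewrite !big_map (XY _ _ (gF _ _ tF)). Qed.

Lemma leg13_leg12E s t :
  teq3 [seq (p.1 * q.1, q.2, p.2) | p <- s, q <- t] (tmul3 (leg13 s) (leg12 t)).
Proof.
move=> W F _; rewrite sum_tmul3 big_allpairs_dep big_map; apply: eq_bigr => p _.
by rewrite big_map; apply: eq_bigr => q _; rewrite /= mulr1 mul1r.
Qed.

Lemma leg12_leg13E s t :
  teq3 [seq (p.1 * q.1, p.2, q.2) | p <- s, q <- t] (tmul3 (leg12 s) (leg13 t)).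
Proof.
move=> W F _; rewrite sum_tmul3 big_allpairs_dep big_map; apply: eq_bigr => p _.
by rewrite big_map; apply: eq_bigr => q _; rewrite /= mulr1 mul1r.
Qed.

Lemma leg13_leg23E s t :
  teq3 [seq (p.1, q.1, p.2 * q.2) | p <- s, q <- t] (tmul3 (leg13 s) (leg23 t)).
Proof.
move=> W F _; rewrite sum_tmul3 big_allpairs_dep big_map; apply: eq_bigr => p _.
by rewrite big_map; apply: eq_bigr => q _; rewrite /= mulr1 mul1r.
Qed.

Lemma leg23_leg13E s t :
  teq3 [seq (q.1, p.1, p.2 * q.2) | p <- s, q <- t] (tmul3 (leg23 s) (leg13 t)).
Proof.
move=> W F _; rewrite sum_tmul3 big_allpairs_dep big_map; apply: eq_bigr => p _.
by rewrite big_map; apply: eq_bigr => q _; rewrite /= mulr1 mul1r.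
Qed.

End TensorMonoids.

Arguments tone3 {k H}.

Section HopfAlgebra.
Variables (k : fieldType) (H : algType k).
Variables (D : H -> tens2 H) (eps : H -> k) (S Si : H -> H).
Hypothesis comul_linear : forall (a : k) (x y : H),
  teq2 (D (a *: x + y)) ([seq (a *: p.1, p.2) | p <- D x] ++ D y).
Hypothesis coassoc : forall h : H,
  teq3 [seq (q.1, q.2, p.2) | p <- D h, q <- D p.1] [seq (p.1, q.1, q.2) | p <- D h, q <- D p.2].
Hypothesis counitl : forall h : H, \sum_(p <- D h) eps p.1 *: p.2 = h.
Hypothesis counitr : forall h : H, \sum_(p <- D h) eps p.2 *: p.1 = h.
Hypothesis comulM : forall x y : H, teq2 (D (x * y)) (tmul (D x) (D y)).
Hypothesis comul1 : teq2 (D 1) (tone H).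
Hypothesis counit_linear : forall (a : k) (x y : H), eps (a *: x + y) = a * eps x + eps y.
Hypothesis counitM : forall x y : H, eps (x * y) = eps x * eps y.
Hypothesis counit1 : eps 1 = 1.
Hypothesis antipode_linear : linear S.
Hypothesis antipodel : forall h : H, \sum_(p <- D h) S p.1 * p.2 = eps h *: 1.
Hypothesis antipoder : forall h : H, \sum_(p <- D h) p.1 * S p.2 = eps h *: 1.
Hypothesis SiK : cancel Si S.
Hypothesis SK : cancel S Si.
Implicit Types (W : lmodType k).

Lemma inv_antipode_linear : linear Si.
Proof. by move=> a x y; apply: (can_inj SK); rewrite SiK antipode_linear !SiK. Qed.

Lemma linear_counit_scale W (w : W) (g : H -> H) :
  linear g -> linear (fun x => eps (g x) *: w).
Proof. by move=> lg a x y; rewrite lg counit_linear scalerDl scalerA. Qed.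

Lemma linear_comul_sum W (G : H * H -> W) (g : H -> H) :
  bilinear_map (fun a b => G (a, b)) -> linear g -> linear (fun x => \sum_(q <- D (g x)) G q).
Proof.
move=> bG lg a x y /=; rewrite lg.
have sumG t : \sum_(q <- t) G (q.1, q.2) = \sum_(q <- t) G q by apply: eq_bigr => -[].
rewrite -!sumG (comul_linear a (g x) (g y) bG) big_cat big_map scaler_sumr.
congr (_ + _); apply: eq_bigr => q _.
by have := linear_funZ (bilinear_linl q.2 bG) a q.1; rewrite /= -surjective_pairing.
Qed.

Local Ltac hopf_multilinear := multilinear_with ltac:(first
  [ apply: linear_comul_sum
  | apply: (linear_comp_fun antipode_linear)
  | apply: (linear_comp_fun inv_antipode_linear)
  | apply: linear_counit_scale ]).

Lemma sum_coassoc W (F : H -> H -> H -> W) : trilinear_map F -> forall h,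
  \sum_(p <- D h) \sum_(q <- D p.1) F q.1 q.2 p.2 =
  \sum_(p <- D h) \sum_(q <- D p.2) F p.1 q.1 q.2.
Proof. by move=> tF h; have := coassoc h tF; rewrite !big_allpairs_dep. Qed.

Lemma sum_comulM W (phi : H -> H -> W) : bilinear_map phi -> forall x y,
  \sum_(p <- D x) \sum_(q <- D y) phi (p.1 * q.1) (p.2 * q.2) =
  \sum_(w <- D (x * y)) phi w.1 w.2.
Proof. by move=> bphi x y; rewrite (comulM x y bphi) sum_tmul. Qed.

Lemma antipode1 : S 1 = 1.
Proof.
have := @comul1 _ (fun x y => S x * y) ltac:(hopf_multilinear).
by rewrite antipodel counit1 scale1r /tone big_seq1 /= mulr1.
Qed.

Lemma sum_mul_antipode2 u v :
  \sum_(p <- D u) \sum_(q <- D v) p.1 * q.1 * S q.2 * S p.2 = (eps u * eps v) *: 1.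
Proof.
transitivity (\sum_(p <- D u) p.1 * (\sum_(q <- D v) q.1 * S q.2) * S p.2).
  apply: eq_bigr => p _; rewrite mulr_sumr mulr_suml; apply: eq_bigr => q _.
  by rewrite !mulrA.
under eq_bigr do rewrite antipoder -scalerAr -scalerAl mulr1.
by rewrite -scaler_sumr antipoder scalerA mulrC.
Qed.

(* The usual convolution argument: both sides equal [S(x1 y1) (x2 y2) S(y3) S(x3)]. *)
Lemma antipodeM x y : S (x * y) = S y * S x.
Proof.
transitivity (\sum_(p <- D x) \sum_(q <- D y) (eps p.2 * eps q.2) *: S (p.1 * q.1)).
  rewrite -{1}(counitr x) -{1}(counitr y) mulr_suml (linear_fun_sum antipode_linear).
  apply: eq_bigr => p _; rewrite mulr_sumr (linear_fun_sum antipode_linear).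
  apply: eq_bigr => q _.
  by rewrite -scalerAl -scalerAr !(linear_funZ antipode_linear) scalerA.
transitivity (\sum_(p <- D x) \sum_(p' <- D p.2) \sum_(q <- D y) \sum_(q' <- D q.2)
    S (p.1 * q.1) * (p'.1 * q'.1 * S q'.2 * S p'.2)).
  apply: eq_bigr => p _; rewrite exchange_big; apply: eq_bigr => q _.
  rewrite -(mulr1 (S _)) scalerAr -sum_mul_antipode2 mulr_sumr; apply: eq_bigr => p' _.
  by rewrite mulr_sumr mulr1.
transitivity (\sum_(p <- D x) \sum_(p' <- D p.2) \sum_(q <- D y) \sum_(q' <- D q.1)
    S (p.1 * q'.1) * (p'.1 * q'.2 * S q.2 * S p'.2)).
  apply: eq_bigr => p _; apply: eq_bigr => p' _; symmetry.
  apply: (sum_coassoc (F := fun a b c => S (p.1 * a) * (p'.1 * b * S c * S p'.2))).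
  by hopf_multilinear.
transitivity (\sum_(p <- D x) \sum_(p' <- D p.1) \sum_(q <- D y) \sum_(q' <- D q.1)
    S (p'.1 * q'.1) * (p'.2 * q'.2 * S q.2 * S p.2)).
  symmetry; apply: (sum_coassoc (F := fun a b c => \sum_(q <- D y) \sum_(q' <- D q.1)
    S (a * q'.1) * (b * q'.2 * S q.2 * S c))).
  by hopf_multilinear.
transitivity (\sum_(p <- D x) \sum_(q <- D y) (eps p.1 * eps q.1) *: (S q.2 * S p.2)).
  apply: eq_bigr => p _; rewrite exchange_big; apply: eq_bigr => q _.
  rewrite (sum_comulM (phi := fun a b => S a * (b * S q.2 * S p.2))); last by hopf_multilinear.
  transitivity ((\sum_(w <- D (p.1 * q.1)) S w.1 * w.2) * (S q.2 * S p.2)).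
    by rewrite mulr_suml; apply: eq_bigr => w _; rewrite !mulrA.
  by rewrite antipodel -scalerAl mul1r counitM.
rewrite -{2}(counitl x) -{2}(counitl y) !(linear_fun_sum antipode_linear) mulr_sumr.
apply: eq_bigr => p _; rewrite mulr_suml; apply: eq_bigr => q _.
by rewrite !(linear_funZ antipode_linear) -scalerAl -scalerAr scalerA mulrC.
Qed.

Lemma sum_comul_inv_antipode h : \sum_(p <- D h) p.2 * Si p.1 = eps h *: 1.
Proof.
apply: (can_inj SK); rewrite (linear_fun_sum antipode_linear) (linear_funZ antipode_linear).
by rewrite antipode1 -antipoder; apply: eq_bigr => p _; rewrite antipodeM SiK.
Qed.

Lemma one_tensor_eq1 u : teq2 [:: (1, u)] (tone H) -> u = 1.
Proof.
move=> /(_ _ (fun x y => eps x *: y)) e.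
by have := e ltac:(hopf_multilinear); rewrite !big_seq1 /= counit1 !scale1r.
Qed.

Lemma tensor_one_eq1 u : teq2 [:: (u, 1)] (tone H) -> u = 1.
Proof.
move=> /(_ _ (fun x y => eps y *: x)) e.
by have := e ltac:(hopf_multilinear); rewrite !big_seq1 /= counit1 !scale1r.
Qed.

Definition comul_l (s : tens2 H) : tens3 H := [seq (q.1, q.2, p.2) | p <- s, q <- D p.1].
Definition comul_r (s : tens2 H) : tens3 H := [seq (p.1, q.1, q.2) | p <- s, q <- D p.2].
Definition comul_l_op (s : tens2 H) : tens3 H := [seq (q.2, q.1, p.2) | p <- s, q <- D p.1].
Definition comul_r_op (s : tens2 H) : tens3 H := [seq (p.1, q.2, q.1) | p <- s, q <- D p.2].

Lemma sum_comul_l_inverse s t : teq2 (tmul s t) (tone H) ->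
  forall W (G : H -> H -> H -> W), trilinear_map G ->
  \sum_(p <- s) \sum_(q <- D p.1) \sum_(r <- t) \sum_(q' <- D r.1)
     G (q.1 * q'.1) (q.2 * q'.2) (p.2 * r.2) = G 1 1 1.
Proof.
move=> st W G tG.
transitivity (\sum_(p <- s) \sum_(r <- t) \sum_(w <- D (p.1 * r.1)) G w.1 w.2 (p.2 * r.2)).
  apply: eq_bigr => p _; rewrite exchange_big; apply: eq_bigr => r _.
  by apply: (sum_comulM (phi := fun x y => G x y (p.2 * r.2))); hopf_multilinear.
rewrite (sum_tmul_one st (phi := fun a b => \sum_(w <- D a) G w.1 w.2 b)); last first.
  by hopf_multilinear.
have := @comul1 _ (fun x y => G x y 1) ltac:(hopf_multilinear).
by rewrite /tone big_seq1.
Qed.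

Lemma sum_comul_r_inverse s t : teq2 (tmul s t) (tone H) ->
  forall W (G : H -> H -> H -> W), trilinear_map G ->
  \sum_(p <- s) \sum_(q <- D p.2) \sum_(r <- t) \sum_(q' <- D r.2)
     G (p.1 * r.1) (q.1 * q'.1) (q.2 * q'.2) = G 1 1 1.
Proof.
move=> st W G tG.
have := sum_comul_l_inverse (tflip_inverse st) (G := fun x y z => G z x y) ltac:(hopf_multilinear).
rewrite big_map => <-; apply: eq_bigr => p _; apply: eq_bigr => q _.
by rewrite big_map.
Qed.

Lemma comul_l_inverse s t : teq2 (tmul s t) (tone H) ->
  teq3 (tmul3 (comul_l s) (comul_l t)) tone3.
Proof.
move=> st W F tF; rewrite sum_tmul3 big_seq1 big_allpairs_dep.
under eq_bigr do under eq_bigr do rewrite big_allpairs_dep /=.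
exact: sum_comul_l_inverse.
Qed.

Lemma comul_l_op_inverse s t : teq2 (tmul s t) (tone H) ->
  teq3 (tmul3 (comul_l_op s) (comul_l_op t)) tone3.
Proof.
move=> st W F tF; rewrite sum_tmul3 big_seq1 big_allpairs_dep.
under eq_bigr do under eq_bigr do rewrite big_allpairs_dep /=.
by apply: (sum_comul_l_inverse st (G := fun x y z => F y x z)); hopf_multilinear.
Qed.

Lemma comul_r_inverse s t : teq2 (tmul s t) (tone H) ->
  teq3 (tmul3 (comul_r s) (comul_r t)) tone3.
Proof.
move=> st W F tF; rewrite sum_tmul3 big_seq1 big_allpairs_dep.
under eq_bigr do under eq_bigr do rewrite big_allpairs_dep /=.
exact: sum_comul_r_inverse.
Qed.

Lemma comul_r_op_inverse s t : teq2 (tmul s t) (tone H) ->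
  teq3 (tmul3 (comul_r_op s) (comul_r_op t)) tone3.
Proof.
move=> st W F tF; rewrite sum_tmul3 big_seq1 big_allpairs_dep.
under eq_bigr do under eq_bigr do rewrite big_allpairs_dep /=.
by apply: (sum_comul_r_inverse st (G := fun x y z => F x z y)); hopf_multilinear.
Qed.

Lemma sum_nu W (R : tens2 H) h (phi : H -> H -> W) :
  \sum_(p <- nu D S R h) phi p.1 p.2 = \sum_(p <- R) \sum_(x <- D2 D h) \sum_(r <- R)
     phi (p.2 * x.1.2 * r.2) (S x.1.1 * S p.1 * x.2 * r.1).
Proof. by rewrite big_allpairs_dep; apply: eq_bigr => p _; rewrite big_allpairs_dep. Qed.

Lemma sum_nu' W (R : tens2 H) h (phi : H -> H -> W) :
  \sum_(p <- nu' D S R h) phi p.1 p.2 = \sum_(p <- R) \sum_(x <- D2 D h) \sum_(r <- R)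
     phi (p.1 * x.1.2 * r.1) (S r.2 * S x.1.1 * p.2 * x.2).
Proof. by rewrite big_allpairs_dep; apply: eq_bigr => p _; rewrite big_allpairs_dep. Qed.

Lemma in_H_tensor_Z_teq2 (s t : tens2 H) : teq2 s t -> in_H_tensor_Z t -> in_H_tensor_Z s.
Proof. by move=> st [u [u_central tu]]; exists u; split=> //; apply: teq2_trans tu. Qed.

Lemma sum_H_tensor_Z_mulr W (T : tens2 H) : in_H_tensor_Z T ->
  forall (phi : H -> H -> W), bilinear_map phi -> forall y,
  \sum_(t <- T) phi t.1 (t.2 * y) = \sum_(t <- T) phi t.1 (y * t.2).
Proof.
move=> [s [s_central Ts]] phi bphi y.
rewrite (Ts _ (fun a b => phi a (b * y))) /=; last by multilinear.
rewrite (Ts _ (fun a b => phi a (y * b))) /=; last by multilinear.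
by rewrite big_seq_cond [RHS]big_seq_cond; apply: eq_bigr => t /andP[/s_central -> _].
Qed.

Lemma sum_Rinv_inv_antipode_r (R Ri : tens2 H) :
  teq2 (tmul R Ri) (tone H) -> teq2 Ri [seq (p.1, Si p.2) | p <- R] ->
  forall W (psi : H -> H -> W), bilinear_map psi ->
  \sum_(s <- Ri) \sum_(t <- Ri) psi (s.1 * t.1) (S s.2 * t.2) = psi 1 1.
Proof.
move=> R_Ri Ri_eq W psi bpsi.
rewrite (Ri_eq _ (fun a b => \sum_(t <- Ri) psi (a * t.1) (S b * t.2))) ?big_map /=;
  last by hopf_multilinear.
by under eq_bigr do rewrite SiK; apply: sum_tmul_one.
Qed.

Lemma sum_Rinv_antipode_l (R Ri : tens2 H) :
  teq2 (tmul R Ri) (tone H) -> teq2 [seq (S p.1, p.2) | p <- R] Ri ->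
  forall W (psi : H -> H -> W), bilinear_map psi ->
  \sum_(t <- Ri) \sum_(s <- Ri) psi (t.2 * s.2) (S s.1 * t.1) = psi 1 1.
Proof.
move=> R_Ri Ri_eq W psi bpsi.
rewrite -(Ri_eq _ (fun a b => \sum_(s <- Ri) psi (b * s.2) (S s.1 * a))) ?big_map /=;
  last by hopf_multilinear.
under eq_bigr do under eq_bigr do rewrite -antipodeM.
have := sum_tmul_one R_Ri (phi := fun a b => psi b (S a)) ltac:(hopf_multilinear).
by rewrite /= antipode1.
Qed.

(* With [T := nu' R h] central in its second leg, [T = T * (s1 t1 ⊗ S(s2) t2)] (summed over two
   copies of [Ri]), and moving [S(s2)] to the front lets [s] cancel the copy of [R] in [T]. *)
Lemma nu_flip_inverse (R Ri : tens2 H) h :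
  teq2 (tmul R Ri) (tone H) -> teq2 Ri [seq (p.1, Si p.2) | p <- R] ->
  in_H_tensor_Z (nu' D S R h) -> teq2 (nu D S (tflip Ri) h) (nu' D S R h).
Proof.
move=> R_Ri Ri_eq hZ W phi bphi.
have split_one := sum_Rinv_inv_antipode_r R_Ri Ri_eq.
have sum_Ri W' (psi : H -> H -> W') : bilinear_map psi ->
    \sum_(t <- Ri) psi t.1 t.2 = \sum_(p <- R) psi p.1 (Si p.2).
  by move=> bpsi; rewrite (Ri_eq _ _ bpsi) big_map.
symmetry; rewrite sum_nu /tflip !big_map /=.
transitivity (\sum_(s <- Ri) \sum_(t <- Ri) \sum_(w <- nu' D S R h)
    phi (w.1 * (s.1 * t.1)) (S s.2 * w.2 * t.2)).
  transitivity (\sum_(s <- Ri) \sum_(t <- Ri) \sum_(w <- nu' D S R h)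
      phi (w.1 * (s.1 * t.1)) (w.2 * S s.2 * t.2)).
    under [RHS]eq_bigr do rewrite exchange_big; rewrite [RHS]exchange_big.
    apply: eq_bigr => w _.
    have := split_one _ (fun a b => phi (w.1 * a) (w.2 * b)) ltac:(hopf_multilinear).
    rewrite /= !mulr1 => <-; apply: eq_bigr => s _; apply: eq_bigr => t _.
    by rewrite !mulrA.
  apply: eq_bigr => s _; apply: eq_bigr => t _.
  apply: (sum_H_tensor_Z_mulr hZ (phi := fun a b => phi (a * (s.1 * t.1)) (b * t.2))).
  by hopf_multilinear.
under [RHS]eq_bigr do under eq_bigr do rewrite big_map /=.
rewrite (sum_Ri _ (fun a b => \sum_(x <- D2 D h) \sum_(r <- Ri)
  phi (a * x.1.2 * r.1) (S x.1.1 * S b * x.2 * r.2))) /=; last by hopf_multilinear.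
under [RHS]eq_bigr do rewrite SiK exchange_big.
rewrite exchange_big [RHS]exchange_big; apply: eq_bigr => t _.
under eq_bigr => s _ do rewrite (sum_nu' R h (fun a b => phi (a * (s.1 * t.1)) (S s.2 * b * t.2))).
rewrite [LHS]exchange_big; apply: eq_bigr => p _; rewrite [LHS]exchange_big; apply: eq_bigr => x _.
have := sum_tmul_one R_Ri (phi := fun a b =>
  phi (p.1 * x.1.2 * a * t.1) (S b * S x.1.1 * p.2 * x.2 * t.2)) ltac:(hopf_multilinear).
rewrite /= antipode1 mulr1 mul1r => <-; rewrite exchange_big.
by apply: eq_bigr => r _; apply: eq_bigr => s _; rewrite antipodeM !mulrA.
Qed.

Lemma nu'_flip_inverse (R Ri : tens2 H) h :
  teq2 (tmul R Ri) (tone H) -> teq2 [seq (S p.1, p.2) | p <- R] Ri ->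
  in_H_tensor_Z (nu D S R h) -> teq2 (nu' D S (tflip Ri) h) (nu D S R h).
Proof.
move=> R_Ri Ri_eq hZ W phi bphi.
have split_one := sum_Rinv_antipode_l R_Ri Ri_eq.
have sum_Ri W' (psi : H -> H -> W') : bilinear_map psi ->
    \sum_(t <- Ri) psi t.1 t.2 = \sum_(p <- R) psi (S p.1) p.2.
  by move=> bpsi; rewrite -(Ri_eq _ _ bpsi) big_map.
symmetry; rewrite sum_nu' /tflip !big_map /=.
transitivity (\sum_(t <- Ri) \sum_(s <- Ri) \sum_(w <- nu D S R h)
    phi (w.1 * (t.2 * s.2)) (S s.1 * w.2 * t.1)).
  transitivity (\sum_(t <- Ri) \sum_(s <- Ri) \sum_(w <- nu D S R h)
      phi (w.1 * (t.2 * s.2)) (w.2 * S s.1 * t.1)).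
    under [RHS]eq_bigr do rewrite exchange_big; rewrite [RHS]exchange_big.
    apply: eq_bigr => w _.
    have := split_one _ (fun a b => phi (w.1 * a) (w.2 * b)) ltac:(hopf_multilinear).
    rewrite /= !mulr1 => <-; apply: eq_bigr => t _; apply: eq_bigr => s _.
    by rewrite !mulrA.
  apply: eq_bigr => t _; apply: eq_bigr => s _.
  apply: (sum_H_tensor_Z_mulr hZ (phi := fun a b => phi (a * (t.2 * s.2)) (b * t.1))).
  by hopf_multilinear.
under [RHS]eq_bigr do under eq_bigr do rewrite big_map /=.
rewrite (sum_Ri _ (fun a b => \sum_(x <- D2 D h) \sum_(r <- Ri)
  phi (b * x.1.2 * r.2) (S r.1 * S x.1.1 * a * x.2))) /=; last by hopf_multilinear.
under [RHS]eq_bigr do rewrite exchange_big.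
rewrite exchange_big [RHS]exchange_big; apply: eq_bigr => s _.
under eq_bigr => t _ do rewrite (sum_nu R h (fun a b => phi (a * (t.2 * s.2)) (S s.1 * b * t.1))).
rewrite [LHS]exchange_big; apply: eq_bigr => p _; rewrite [LHS]exchange_big; apply: eq_bigr => x _.
have := sum_tmul_one R_Ri (phi := fun a b =>
  phi (p.2 * x.1.2 * b * s.2) (S s.1 * S x.1.1 * S p.1 * x.2 * a)) ltac:(hopf_multilinear).
rewrite /= !mulr1 => <-; rewrite exchange_big.
by apply: eq_bigr => r _; apply: eq_bigr => t _; rewrite !mulrA.
Qed.

Section Semiquasitriangular.
Variables R Ri : tens2 H.
Hypothesis R_Ri : teq2 (tmul R Ri) (tone H).
Hypothesis Ri_R : teq2 (tmul Ri R) (tone H).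
Hypothesis comul_l_R : teq3 (comul_l R) [seq (p.1, q.1, p.2 * q.2) | p <- R, q <- R].
Hypothesis comul_r_R : teq3 (comul_r R) [seq (p.1 * q.1, q.2, p.2) | p <- R, q <- R].
Hypothesis R23_conj_comul_r : teq3
  [seq (p.1, qr.1.2 * qr.2.1, qr.1.1 * qr.2.2) | p <- R, qr <- [seq (q, r) | q <- D p.2, r <- R]]
  [seq (p.1, qr.2.1 * qr.1.1, qr.2.2 * qr.1.2) | p <- R, qr <- [seq (q, r) | q <- D p.2, r <- R]].
Hypothesis R12_conj_comul_l : teq3
  [seq (qr.1.2 * qr.2.1, qr.1.1 * qr.2.2, p.2) | p <- R, qr <- [seq (q, r) | q <- D p.1, r <- R]]
  [seq (qr.2.1 * qr.1.1, qr.2.2 * qr.1.2, p.2) | p <- R, qr <- [seq (q, r) | q <- D p.1, r <- R]].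

Lemma counit_l_R : \sum_(p <- R) eps p.1 *: p.2 = 1.
Proof.
set u := \sum_(p <- R) eps p.1 *: p.2.
apply: one_tensor_eq1; apply: (teq2_left_cancel _ R_Ri) => W phi bphi.
rewrite sum_tmul big_seq1 /=.
have := @comul_l_R _ (fun x y z => eps x *: phi y z) ltac:(hopf_multilinear).
rewrite !big_allpairs_dep /= => axiom.
transitivity (\sum_(p <- R) \sum_(q <- D p.1) eps q.1 *: phi q.2 p.2); last first.
  apply: eq_bigr => p _.
  by rewrite -(linear_fun_scale_sum (f := fun x => phi x p.2)) ?counitl //; hopf_multilinear.
rewrite axiom exchange_big; apply: eq_bigr => q _.
rewrite mul1r -(linear_fun_scale_sum (f := fun x => phi q.1 x)); last by hopf_multilinear.
by rewrite /u mulr_suml; congr (phi _ _); apply: eq_bigr => p _; rewrite scalerAl.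
Qed.

Lemma counit_r_R : \sum_(p <- R) eps p.2 *: p.1 = 1.
Proof.
set u := \sum_(p <- R) eps p.2 *: p.1.
apply: tensor_one_eq1; apply: (teq2_right_cancel _ Ri_R) => W phi bphi.
rewrite sum_tmul; under eq_bigr do rewrite big_seq1 /=.
have := @comul_r_R _ (fun x y z => eps y *: phi x z) ltac:(hopf_multilinear).
rewrite !big_allpairs_dep /= => axiom.
transitivity (\sum_(p <- R) \sum_(q <- D p.2) eps q.1 *: phi p.1 q.2); last first.
  apply: eq_bigr => p _.
  by rewrite -(linear_fun_scale_sum (f := fun x => phi p.1 x)) ?counitl //; hopf_multilinear.
rewrite axiom; apply: eq_bigr => p _.
rewrite mulr1 -(linear_fun_scale_sum (f := fun x => phi (p.1 * x) p.2)); last by hopf_multilinear.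
by rewrite /u mulr_sumr; congr (phi _ _); congr (_ * _); apply: eq_bigr => q _; rewrite scalerAr.
Qed.

Lemma antipode_l_R : teq2 [seq (S p.1, p.2) | p <- R] Ri.
Proof.
apply: (teq2_inverse_unique _ (teq2_refl R) R_Ri) => W phi bphi.
rewrite sum_tmul big_map big_seq1 /=.
have := @comul_l_R _ (fun x y z => phi (S x * y) z) ltac:(hopf_multilinear).
rewrite !big_allpairs_dep /= => <-.
transitivity (\sum_(p <- R) phi (\sum_(q <- D p.1) S q.1 * q.2) p.2).
  by apply: eq_bigr => p _; rewrite (linear_fun_sum (f := fun x => phi x p.2)) //; hopf_multilinear.
under eq_bigr do rewrite antipodel bilinearZl //.
by rewrite -(linear_fun_scale_sum (f := fun x => phi 1 x)) ?counit_l_R //; hopf_multilinear.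
Qed.

Lemma inv_antipode_r_R : teq2 Ri [seq (p.1, Si p.2) | p <- R].
Proof.
apply: (teq2_inverse_unique Ri_R (teq2_refl R)) => W phi bphi.
rewrite sum_tmul /tone big_seq1 /=; under eq_bigr do rewrite big_map.
have := @comul_r_R _ (fun x y z => phi x (z * Si y)) ltac:(hopf_multilinear).
rewrite !big_allpairs_dep /= => <-.
transitivity (\sum_(p <- R) phi p.1 (\sum_(q <- D p.2) q.2 * Si q.1)).
  by apply: eq_bigr => p _; rewrite (linear_fun_sum (f := fun x => phi p.1 x)) //; hopf_multilinear.
under eq_bigr do rewrite sum_comul_inv_antipode bilinearZr //.
by rewrite -(linear_fun_scale_sum (f := fun x => phi x 1)) ?counit_r_R //; hopf_multilinear.
Qed.

Lemma comul_l_flip_Rinv : teq3 [seq (q.1, q.2, p.2) | p <- tflip Ri, q <- D p.1]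
  [seq (p.1, q.1, p.2 * q.2) | p <- tflip Ri, q <- tflip Ri].
Proof.
have comul_r_Ri : teq3 (comul_r Ri) [seq (p.1 * q.1, p.2, q.2) | p <- Ri, q <- Ri].
  apply: (teq3_inverse_unique (comul_r_inverse Ri_R) comul_r_R).
  apply: teq3_trans (tmul3_teq3 (leg13_leg12E R R) (leg12_leg13E Ri Ri)) _.
  exact: teq3_mul_inverse (leg13_inverse R_Ri) (leg12_inverse R_Ri).
have := teq3_permute (g := fun x y z => (y, z, x)) _ comul_r_Ri.
rewrite /tflip !allpairs_mapl !allpairs_mapr !map_allpairs; apply=> W F tF.
hopf_multilinear.
Qed.

Lemma comul_r_flip_Rinv : teq3 [seq (p.1, q.1, q.2) | p <- tflip Ri, q <- D p.2]
  [seq (p.1 * q.1, q.2, p.2) | p <- tflip Ri, q <- tflip Ri].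
Proof.
have comul_l_Ri : teq3 (comul_l Ri) [seq (q.1, p.1, p.2 * q.2) | p <- Ri, q <- Ri].
  apply: (teq3_inverse_unique (comul_l_inverse Ri_R) comul_l_R).
  apply: teq3_trans (tmul3_teq3 (leg13_leg23E R R) (leg23_leg13E Ri Ri)) _.
  exact: teq3_mul_inverse (leg13_inverse R_Ri) (leg23_inverse R_Ri).
have := teq3_permute (g := fun x y z => (z, x, y)) _ comul_l_Ri.
rewrite /tflip !allpairs_mapl !allpairs_mapr !map_allpairs; apply=> W F tF.
hopf_multilinear.
Qed.

Lemma R12_conj_comul_l_Rinv :
  teq3 (tmul3 (comul_l Ri) (leg12 Ri)) (tmul3 (leg12 Ri) (comul_l_op Ri)).
Proof.
apply: teq3_conj_inverse (comul_l_op_inverse R_Ri) (leg12_inverse R_Ri)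
  (leg12_inverse Ri_R) (comul_l_inverse Ri_R) => W F tF.
have := R12_conj_comul_l tF; rewrite !big_allpairs_nested /= => axiom.
rewrite !sum_tmul3 big_allpairs_dep big_map /=.
under eq_bigr do under eq_bigr do rewrite big_map /= mulr1.
under [RHS]eq_bigr do rewrite big_allpairs_dep /=.
rewrite axiom [RHS]exchange_big; apply: eq_bigr => p _; rewrite [RHS]exchange_big.
by apply: eq_bigr => q _; apply: eq_bigr => r _; rewrite mul1r.
Qed.

Lemma R23_conj_comul_r_flip_Rinv : teq3
  [seq (p.1, qr.1.2 * qr.2.1, qr.1.1 * qr.2.2)
     | p <- tflip Ri, qr <- [seq (q, r) | q <- D p.2, r <- tflip Ri]]
  [seq (p.1, qr.2.1 * qr.1.1, qr.2.2 * qr.1.2)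
     | p <- tflip Ri, qr <- [seq (q, r) | q <- D p.2, r <- tflip Ri]].
Proof.
move=> W F tF; pose G x y z := F z y x.
transitivity (\sum_(w <- tmul3 (comul_l Ri) (leg12 Ri)) G w.1.1 w.1.2 w.2).
  rewrite sum_tmul3 big_allpairs_nested big_map big_allpairs_dep; apply: eq_bigr => p _.
  by apply: eq_bigr => q _; rewrite !big_map; apply: eq_bigr => r _; rewrite /G /= mulr1.
rewrite (R12_conj_comul_l_Rinv (phi := G)); last by rewrite /G; hopf_multilinear.
rewrite sum_tmul3 big_allpairs_nested big_map exchange_big big_allpairs_dep big_map.
apply: eq_bigr => p _; apply: eq_bigr => q _.
by rewrite big_map; apply: eq_bigr => r _; rewrite /G /= mul1r.
Qed.

Lemma R23_conj_comul_r_Rinv :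
  teq3 (tmul3 (comul_r Ri) (leg23 Ri)) (tmul3 (leg23 Ri) (comul_r_op Ri)).
Proof.
apply: teq3_conj_inverse (comul_r_op_inverse R_Ri) (leg23_inverse R_Ri)
  (leg23_inverse Ri_R) (comul_r_inverse Ri_R) => W F tF.
have := R23_conj_comul_r tF; rewrite !big_allpairs_nested /= => axiom.
rewrite !sum_tmul3 big_allpairs_dep big_map /=.
under eq_bigr do under eq_bigr do rewrite big_map /= mulr1.
under [RHS]eq_bigr do rewrite big_allpairs_dep /=.
rewrite axiom [RHS]exchange_big; apply: eq_bigr => p _; rewrite [RHS]exchange_big.
by apply: eq_bigr => q _; apply: eq_bigr => r _; rewrite mul1r.
Qed.

Lemma R12_conj_comul_l_flip_Rinv : teq3
  [seq (qr.1.2 * qr.2.1, qr.1.1 * qr.2.2, p.2)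
     | p <- tflip Ri, qr <- [seq (q, r) | q <- D p.1, r <- tflip Ri]]
  [seq (qr.2.1 * qr.1.1, qr.2.2 * qr.1.2, p.2)
     | p <- tflip Ri, qr <- [seq (q, r) | q <- D p.1, r <- tflip Ri]].
Proof.
move=> W F tF; pose G x y z := F z y x.
transitivity (\sum_(w <- tmul3 (comul_r Ri) (leg23 Ri)) G w.1.1 w.1.2 w.2).
  rewrite sum_tmul3 big_allpairs_nested big_map big_allpairs_dep; apply: eq_bigr => p _.
  by apply: eq_bigr => q _; rewrite !big_map; apply: eq_bigr => r _; rewrite /G /= mulr1.
rewrite (R23_conj_comul_r_Rinv (phi := G)); last by rewrite /G; hopf_multilinear.
rewrite sum_tmul3 big_allpairs_nested big_map exchange_big big_allpairs_dep big_map.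
apply: eq_bigr => p _; apply: eq_bigr => q _.
by rewrite big_map; apply: eq_bigr => r _; rewrite /G /= mul1r.
Qed.

Lemma nu'_flip_Rinv h :
  in_H_tensor_Z (nu D S R h) -> teq2 (nu' D S (tflip Ri) h) (nu D S R h).
Proof. exact: nu'_flip_inverse R_Ri antipode_l_R. Qed.

Hypothesis nu_R_central : forall h : H, in_H_tensor_Z (nu D S R h).
Hypothesis nu_R_nu' : forall h : H, teq2 (nu D S R h) (nu' D S R h).

Lemma nu_flip_Rinv h : teq2 (nu D S (tflip Ri) h) (nu D S R h).
Proof.
have nu'_central := in_H_tensor_Z_teq2 (teq2_sym (nu_R_nu' h)) (nu_R_central h).
exact: teq2_trans (nu_flip_inverse R_Ri inv_antipode_r_R nu'_central) (teq2_sym (nu_R_nu' h)).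
Qed.

Lemma semiquasitriangular_flip_Rinv : semiquasitriangular D S (tflip Ri).
Proof.
split; first by exists (tflip R); split; apply: tflip_inverse.
split; first exact: comul_l_flip_Rinv.
split; first exact: comul_r_flip_Rinv.
split; first exact: R23_conj_comul_r_flip_Rinv.
split; first exact: R12_conj_comul_l_flip_Rinv.
split=> h; first exact: in_H_tensor_Z_teq2 (nu_flip_Rinv h) (nu_R_central h).
exact: teq2_trans (nu_flip_Rinv h) (teq2_sym (nu'_flip_Rinv (nu_R_central h))).
Qed.

End Semiquasitriangular.

End HopfAlgebra.

Unset Implicit Arguments.

Theorem proposition1p10 (k : fieldType) (H : algType k)
  (D : H -> tens2 H) (eps : H -> k) (S : H -> H)
  (hopfH : is_hopf D eps S) (bijS : bijective S)
  (R Rinv : tens2 H)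
  (HRRinv : teq2 (tmul R Rinv) (tone H)) (HRinvR : teq2 (tmul Rinv R) (tone H))
  (semiR : semiquasitriangular D S R) :
  semiquasitriangular D S (tflip Rinv).
Proof.
case: hopfH => comul_lin [coassoc [counit [comulM [comul1 [[counit_lin counitM counit1]
  [antipode_lin antipode]]]]]].
case: bijS => Si SK SiK.
case: semiR => _ [comul_l_R [comul_r_R [R23_conj [R12_conj [nu_central nu_nu']]]]].
exact: (semiquasitriangular_flip_Rinv comul_lin coassoc (fun h => (counit h).1)
  (fun h => (counit h).2) comulM comul1 counit_lin counitM counit1 antipode_lin
  (fun h => (antipode h).1) (fun h => (antipode h).2) SiK SK HRRinv HRinvR
  comul_l_R comul_r_R R23_conj R12_conj nu_central nu_nu').
Qed.
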